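(* Let $m\ge1$ be an integer with $m\equiv r\pmod{12}$, $0\le r\le 11$. If $r\notin\{2,4,6,8,10\}$, then the friendship graph $F_j$ is $\mathbb{Z}_m$-cordial for every $j\in\mathbb{N}$ with $j\le\lfloor m/2\rfloor$. If $m\equiv 2\pmod{12}$, then $F_j$ is $\mathbb{Z}_m$-cordial for every $j\in\mathbb{N}$ with $j\le\lfloor m/2\rfloor-1$.
   Context: Graphs are finite, simple and undirected. For $n\in\mathbb{N}$, the friendship graph $F_n$ is the union of $n$ copies of the triangle $C_3$ joined at a single common (central) vertex. For an abelian group $A$ and a graph $G=(V,E)$, a vertex labeling $\ell:V\to A$ induces an edge labeling $\ell(\{v_1,v_2\})=\ell(v_1)+\ell(v_2)$. Let $f_V(a)=|\{v\in V:\ell(v)=a\}|$ and $f_E(a)=|\{e\in E:\ell(e)=a\}|$. The labeling is $A$-cordial if $|f_V(a_1)-f_V(a_2)|\le 1$ and $|f_E(a_1)-f_E(a_2)|\le 1$ for all $a_1,a_2\in A$; $G$ is $A$-cordial if it admits an $A$-cordial labeling. *)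

From mathcomp Require Import all_boot.
Set Implicit Arguments. Unset Strict Implicit. Unset Printing Implicit Defensive.

(* A finite simple graph is given by a vertex finType V and the list of its
   edges (each edge listed once as an ordered pair of distinct vertices). *)

(* Friendship graph F_n: vertices 0..2n, central vertex 0, and for each
   k < n the triangle {0, 2k+1, 2k+2}. *)
Definition friendship_edges (n : nat) : seq ('I_(n.*2).+1 * 'I_(n.*2).+1) :=
  flatten [seq [:: (inord 0, inord k.*2.+1); (inord 0, inord k.*2.+2);
                   (inord k.*2.+1, inord k.*2.+2)] | k <- iota 0 n].

(* Z_m (m >= 1) is represented by 'I_m with addition modulo m.
   A vertex labeling l : V -> 'I_m induces the edge label (l u + l v) mod m. *)
Definition fV (m : nat) (V : finType) (l : V -> 'I_m) (a : 'I_m) : nat :=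
  #|[set v | l v == a]|.

Definition fE (m : nat) (V : finType) (E : seq (V * V)) (l : V -> 'I_m)
    (a : 'I_m) : nat :=
  count (fun e => (l e.1 + l e.2) %% m == a) E.

Definition Zm_cordial_labeling (m : nat) (V : finType) (E : seq (V * V))
    (l : V -> 'I_m) : Prop :=
  forall a1 a2 : 'I_m,
    fV l a1 <= fV l a2 + 1 /\ fE E l a1 <= fE E l a2 + 1.

Definition Zm_cordial (m : nat) (V : finType) (E : seq (V * V)) : Prop :=
  exists l : V -> 'I_m, Zm_cordial_labeling E l.

From mathcomp Require Import all_boot zify.
Set Implicit Arguments. Unset Strict Implicit. Unset Printing Implicit Defensive.

(* Label the centre of F_j with 0 and the k-th triangle with a pair (f k, g k):
   the vertex labels are 0, f k, g k and the edge labels are f k, g k and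
   f k + g k, and only their residues mod m matter.  A list of naturals is
   balanced mod m if its elements are distinct and lie in a window of m
   consecutive integers, or if it is the union of two such lists which together
   cover a window.  The pairs come from Skolem-type pairings: for j = 2p+1 they
   use exactly the labels 1..2j and their sums form an interval; for even j a
   label or a sum has to be displaced.  Translating all labels by t translates
   the sums by 2t: if m >= 3j we translate so that labels and sums lie
   disjointly in one window, if 2j < m < 3j so that together they cover a
   window.  For m = 3j we use a partition of 1..3j into triples {x, y, x + y},
   which exists when 4 divides j. *)

(** * Balanced residue lists *)

Section ResidueCounts.
Variable m : nat.

Definition residue_count (s : seq nat) (a : nat) : nat :=
  count (fun x => x %% m == a) s.

Definition balanced (s : seq nat) : Prop :=
  forall a1 a2 : 'I_m, residue_count s a1 <= residue_count s a2 + 1.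

Lemma residue_countE s a : residue_count s a = count_mem a [seq x %% m | x <- s].
Proof. by rewrite count_map. Qed.

Lemma residue_count_cat s1 s2 a :
  residue_count (s1 ++ s2) a = residue_count s1 a + residue_count s2 a.
Proof. exact: count_cat. Qed.

Lemma window_modn_inj lo : {in [pred x | lo <= x < lo + m] &, injective (modn^~ m)}.
Proof.
suff le_inj x y : lo <= x -> y < lo + m -> x <= y -> x %% m = y %% m -> x = y.
  move=> x y /andP[lo_x x_lt] /andP[lo_y y_lt] /= exy.
  by case: (leqP x y) => [|/ltnW] le; [exact: le_inj | exact/esym/le_inj].
move=> lo_x y_lt le_xy exy.
have : m %| y - x by rewrite -eqn_mod_dvd // exy.
have [lt_xy | ] := ltnP x y; last lia.
by move/dvdn_leq; rewrite subn_gt0 => /(_ lt_xy); lia.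
Qed.

Lemma uniq_residues s lo :
  uniq s -> {in s, forall x, lo <= x < lo + m} -> uniq [seq x %% m | x <- s].
Proof.
move=> s_uniq s_win; rewrite map_inj_in_uniq // => x y /s_win x_win /s_win y_win.
exact: (window_modn_inj x_win y_win).
Qed.

Lemma residue_count_le1 s lo a :
  uniq s -> {in s, forall x, lo <= x < lo + m} -> residue_count s a <= 1.
Proof.
move=> s_uniq s_win; rewrite residue_countE count_uniq_mem ?leq_b1 //.
exact: uniq_residues s_uniq s_win.
Qed.

Lemma residue_count_gt0 s lo a :
  a < m -> {subset iota lo m <= s} -> 0 < residue_count s a.
Proof.
move=> a_lt sub_s; rewrite residue_countE -has_count has_pred1.
have res_uniq : uniq [seq x %% m | x <- iota lo m].
  by apply: (uniq_residues (lo := lo) (iota_uniq lo m)) => x; rewrite mem_iota.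
have res_sub : {subset [seq x %% m | x <- iota lo m] <= iota 0 m}.
  by move=> _ /mapP[x _ ->]; rewrite mem_iota add0n ltn_pmod //; lia.
have res_size : size (iota 0 m) <= size [seq x %% m | x <- iota lo m].
  by rewrite size_map !size_iota.
have [_ /(_ a)] := uniq_min_size res_uniq res_sub res_size.
by rewrite mem_iota a_lt => /mapP[x /sub_s x_s ->]; apply: map_f.
Qed.

Lemma balanced_window s lo :
  uniq s -> {in s, forall x, lo <= x < lo + m} -> balanced s.
Proof.
move=> s_uniq s_win a1 a2.
by rewrite (leq_trans (residue_count_le1 a1 s_uniq s_win)) // leq_addl.
Qed.

Lemma balanced_cat_cover s1 s2 lo1 lo2 lo :
  uniq s1 -> {in s1, forall x, lo1 <= x < lo1 + m} ->
  uniq s2 -> {in s2, forall x, lo2 <= x < lo2 + m} ->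
  {subset iota lo m <= s1 ++ s2} -> balanced (s1 ++ s2).
Proof.
move=> uniq1 win1 uniq2 win2 cover a1 a2.
have := residue_count_gt0 (ltn_ord a2) cover; rewrite !residue_count_cat.
have := residue_count_le1 a1 uniq1 win1; have := residue_count_le1 a1 uniq2 win2.
lia.
Qed.

Lemma balanced_all s :
  all (fun a1 => all (fun a2 => residue_count s a1 <= residue_count s a2 + 1)
                     (iota 0 m)) (iota 0 m) ->
  balanced s.
Proof.
move=> /allP bal a1 a2.
have a_in (a : 'I_m) : val a \in iota 0 m by rewrite mem_iota ltn_ord.
exact: (allP (bal _ (a_in a1))) _ (a_in a2).
Qed.

End ResidueCounts.

Lemma uniq_perm_subset (T : eqType) (s r : seq T) :
  uniq s -> uniq r -> {subset s <= r} -> size r <= size s -> perm_eq s r.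
Proof.
move=> s_uniq r_uniq s_r r_size; apply: uniq_perm => //.
by have [] := uniq_min_size s_uniq s_r r_size.
Qed.

Lemma perm_iota_window s lo n :
  uniq s -> {in s, forall x, lo <= x < lo + n} -> n <= size s -> perm_eq s (iota lo n).
Proof.
move=> s_uniq s_win n_size; apply: uniq_perm_subset; rewrite ?iota_uniq ?size_iota //.
by move=> x /s_win; rewrite mem_iota.
Qed.

Lemma shift_perm_iota s t lo n :
  perm_eq s (iota lo n) -> perm_eq [seq t + x | x <- s] (iota (t + lo) n).
Proof. by rewrite iotaDl; apply: perm_map. Qed.

Lemma uniq_map_iota n (F : nat -> nat) :
  (forall k1 k2, k1 < n -> k2 < n -> F k1 = F k2 -> k1 = k2) ->
  uniq [seq F k | k <- iota 0 n].
Proof.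
move=> F_inj; rewrite map_inj_in_uniq ?iota_uniq // => k1 k2.
by rewrite !mem_iota => /andP[_ k1_lt] /andP[_ k2_lt]; apply: F_inj.
Qed.

Lemma perm_flatten_pairs (I : Type) (T : eqType) (s : seq I) (F G : I -> T)
    (H : I -> seq T) :
  perm_eq (flatten [seq F i :: G i :: H i | i <- s])
    ([seq F i | i <- s] ++ [seq G i | i <- s] ++ flatten [seq H i | i <- s]).
Proof.
elim: s => //= i s /permP IH; apply/permP => p.
by rewrite /= !count_cat /= IH !count_cat; lia.
Qed.

(** * Labelings of friendship graphs *)

Definition vertex_labels (j : nat) (f g : nat -> nat) : seq nat :=
  [seq f k | k <- iota 0 j] ++ [seq g k | k <- iota 0 j].

Definition sum_labels (j : nat) (f g : nat -> nat) : seq nat :=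
  [seq f k + g k | k <- iota 0 j].

(* The centre 0 gets 0 and the triangle {0, 2k+1, 2k+2} of [friendship_edges]
   gets f k and g k. *)
Definition friendship_label (f g : nat -> nat) (v : nat) : nat :=
  if v is u.+1 then (if odd u then g else f) u./2 else 0.

Lemma friendship_label_odd f g k : friendship_label f g k.*2.+1 = f k.
Proof. by rewrite /= odd_double doubleK. Qed.

Lemma friendship_label_even f g k : friendship_label f g k.*2.+2 = g k.
Proof. by rewrite /= odd_double uphalf_double. Qed.

Lemma map_friendship_label_iota j f g :
  [seq friendship_label f g v | v <- iota 1 j.*2] =
  flatten [seq [:: f k; g k] | k <- iota 0 j].
Proof.
elim: j => // j IH.
rewrite doubleS -addn2 iotaD -[j.+1]addn1 iotaD !map_cat flatten_cat IH add1n add0n /=.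
by rewrite odd_double doubleK uphalf_double.
Qed.

Lemma friendship_vertex_labels j f g :
  perm_eq [seq friendship_label f g v | v <- iota 0 (j.*2).+1] (0 :: vertex_labels j f g).
Proof.
rewrite [iota 0 _]/= map_cons map_friendship_label_iota perm_cons.
rewrite (perm_trans (perm_flatten_pairs _ _ _ (fun=> [::]))) //.
by rewrite (allpairs0r (fun _ (y : nat) => y)) cats0.
Qed.

Lemma friendship_edge_labels j f g :
  perm_eq [seq friendship_label f g e.1 + friendship_label f g e.2
            | e : 'I_(j.*2).+1 * 'I_(j.*2).+1 <- friendship_edges j]
    (vertex_labels j f g ++ sum_labels j f g).
Proof.
rewrite /friendship_edges map_flatten -map_comp.
set labels := (X in map X (iota 0 j)).
have -> : map labels (iota 0 j) = [seq [:: f k; g k; f k + g k] | k <- iota 0 j].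
  apply/eq_in_map => k; rewrite mem_iota => /andP[_ k_lt].
  rewrite /labels /= !inordK; try lia.
  by rewrite friendship_label_odd friendship_label_even.
by rewrite (perm_trans (perm_flatten_pairs _ _ _ _)) // flatten_map1 catA.
Qed.

Lemma mem_vertex_labels j f g x :
  x \in vertex_labels j f g -> exists2 k, k < j & x = f k \/ x = g k.
Proof.
by rewrite mem_cat => /orP[] /mapP[k]; rewrite mem_iota => /andP[_ k_lt] ->;
  exists k; auto.
Qed.

Lemma mem_sum_labels j f g x :
  x \in sum_labels j f g -> exists2 k, k < j & x = f k + g k.
Proof. by move=> /mapP[k]; rewrite mem_iota => /andP[_ k_lt] ->; exists k. Qed.

Lemma size_vertex_labels j f g : size (vertex_labels j f g) = j.*2.
Proof. by rewrite size_cat !size_map size_iota addnn. Qed.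

Lemma size_sum_labels j f g : size (sum_labels j f g) = j.
Proof. by rewrite size_map size_iota. Qed.

Lemma uniq_vertex_labels j f g :
  (forall k1 k2, k1 < j -> k2 < j -> f k1 = f k2 -> k1 = k2) ->
  (forall k1 k2, k1 < j -> k2 < j -> g k1 = g k2 -> k1 = k2) ->
  (forall k1 k2, k1 < j -> k2 < j -> f k1 <> g k2) ->
  uniq (vertex_labels j f g).
Proof.
move=> f_inj g_inj fg_neq; rewrite cat_uniq !uniq_map_iota // andbT /=.
apply/hasPn => _ /mapP[k2 + ->]; rewrite mem_iota => /andP[_ k2_lt].
apply/negP => /mapP[k1]; rewrite mem_iota => /andP[_ k1_lt] /esym.
exact: fg_neq.
Qed.

Definition shift (t : nat) (f : nat -> nat) (k : nat) : nat := t + f k.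

Lemma vertex_labels_shift j f g t :
  vertex_labels j (shift t f) (shift t g) = [seq t + x | x <- vertex_labels j f g].
Proof. by rewrite /vertex_labels map_cat -!map_comp. Qed.

Lemma sum_labels_shift j f g t :
  sum_labels j (shift t f) (shift t g) = [seq t.*2 + x | x <- sum_labels j f g].
Proof. by rewrite /sum_labels -map_comp; apply: eq_map => k; rewrite /shift /=; lia. Qed.

Section FriendshipLabeling.
Variables (m j : nat) (f g : nat -> nat).
Hypothesis m_gt0 : 0 < m.

Definition friendship_labeling (v : 'I_(j.*2).+1) : 'I_m :=
  Ordinal (ltn_pmod (friendship_label f g v) m_gt0).

Lemma fV_friendship_labeling a :
  fV friendship_labeling a = residue_count m (0 :: vertex_labels j f g) a.
Proof.
rewrite /residue_count -(permP (friendship_vertex_labels j f g)) count_map.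
by rewrite /fV cardsE cardE /enum_mem -enumT size_filter -val_enum_ord count_map.
Qed.

Lemma fE_friendship_labeling a :
  fE (friendship_edges j) friendship_labeling a =
  residue_count m (vertex_labels j f g ++ sum_labels j f g) a.
Proof.
rewrite /residue_count -(permP (friendship_edge_labels j f g)) count_map.
by apply: eq_count => e; rewrite /= modnDm.
Qed.

Lemma cordial_of_balanced :
  balanced m (0 :: vertex_labels j f g) ->
  balanced m (vertex_labels j f g ++ sum_labels j f g) ->
  Zm_cordial m (friendship_edges j).
Proof.
move=> balV balE; exists friendship_labeling => a1 a2.
by rewrite !fV_friendship_labeling !fE_friendship_labeling.
Qed.

Lemma cordial_of_distinct_labels lo :
  uniq (vertex_labels j f g ++ sum_labels j f g) ->
  {in vertex_labels j f g ++ sum_labels j f g, forall x, lo <= x < lo + m} ->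
  {in vertex_labels j f g, forall x, 0 < x < m} ->
  Zm_cordial m (friendship_edges j).
Proof.
move=> E_uniq E_win V_pos.
apply: cordial_of_balanced; last exact: balanced_window E_uniq E_win.
have V_uniq : uniq (vertex_labels j f g) by move: E_uniq; rewrite cat_uniq => /andP[].
apply: (balanced_window (lo := 0)).
  by rewrite /= V_uniq andbT; apply/negP => /V_pos.
by move=> x; rewrite inE => /predU1P[-> | /V_pos]; lia.
Qed.

Lemma cordial_of_separated_labels lo mid :
  uniq (vertex_labels j f g) -> uniq (sum_labels j f g) ->
  {in vertex_labels j f g, forall x, lo <= x < mid} ->
  {in sum_labels j f g, forall x, mid <= x < lo + m} ->
  0 < lo <= mid -> mid <= m ->
  Zm_cordial m (friendship_edges j).
Proof.
move=> V_uniq S_uniq V_win S_win lo_mid mid_le.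
apply: (cordial_of_distinct_labels (lo := lo)).
- rewrite cat_uniq V_uniq S_uniq andbT /=.
  by apply/hasPn => x /S_win x_win; apply/negP => /V_win; lia.
- by move=> x; rewrite mem_cat => /orP[/V_win | /S_win]; lia.
- by move=> x /V_win; lia.
Qed.

Lemma cordial_of_covering_labels t lo :
  perm_eq (vertex_labels j f g) (iota t.+1 j.*2) ->
  uniq (sum_labels j f g) -> {in sum_labels j f g, forall x, lo <= x < lo + m} ->
  {subset iota (t + j.*2).+1 (m - j.*2) <= sum_labels j f g} ->
  t + j.*2 < m \/ t = 0 /\ j.*2 = m ->
  Zm_cordial m (friendship_edges j).
Proof.
move=> V_perm S_uniq S_win S_cover room.
have V_uniq : uniq (vertex_labels j f g) by rewrite (perm_uniq V_perm) iota_uniq.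
have V_mem x : (x \in vertex_labels j f g) = (t < x < t.+1 + j.*2).
  by rewrite (perm_mem V_perm) mem_iota.
apply: cordial_of_balanced.
  case: room => [fits | [t0 full]].
    apply: (balanced_window (lo := 0)); first by rewrite /= V_uniq andbT V_mem.
    by move=> x; rewrite inE V_mem => /predU1P[-> | ]; lia.
  apply: (balanced_cat_cover (s1 := [:: 0]) (lo1 := 0) (lo2 := 1) (lo := 0)) => //.
  - by move=> x; rewrite inE => /eqP ->.
  - by move=> x; rewrite V_mem; lia.
  - by move=> x; rewrite mem_iota inE V_mem; case: x => //= x; lia.
apply: (balanced_cat_cover (lo1 := t.+1) (lo2 := lo) (lo := t.+1)) => //.
- by move=> x; rewrite V_mem; case: room; lia.
- move=> x; rewrite mem_iota mem_cat V_mem => x_win.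
  have [x_lt | x_ge] := ltnP x (t.+1 + j.*2); first by rewrite andbT; lia.
  by rewrite S_cover ?orbT // mem_iota; case: room; lia.
Qed.

End FriendshipLabeling.

(** * Skolem-type pairings *)

Local Ltac piecewise_lia := repeat case: ifP => ?; lia.

Definition odd_second (p k : nat) : nat :=
  if k <= p then 4 * p + 2 - 2 * k else 6 * p + 3 - 2 * k.

Lemma odd_pairing_vertices p :
  perm_eq (vertex_labels p.*2.+1 succn (odd_second p)) (iota 1 (p.*2.+1).*2).
Proof.
apply: perm_iota_window; last by rewrite size_vertex_labels.
  by apply: uniq_vertex_labels => k1 k2; rewrite /odd_second; piecewise_lia.
by move=> x /mem_vertex_labels[k k_lt [->|->]]; rewrite /odd_second; piecewise_lia.
Qed.

Lemma odd_pairing_sums p :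
  perm_eq (sum_labels p.*2.+1 succn (odd_second p)) (iota (3 * p + 3) p.*2.+1).
Proof.
apply: perm_iota_window; last by rewrite size_sum_labels.
  by apply: uniq_map_iota => k1 k2; rewrite /odd_second; piecewise_lia.
by move=> x /mem_sum_labels[k k_lt ->]; rewrite /odd_second; piecewise_lia.
Qed.

(* For j = 2p the sums of a pairing of 1..2j cannot form an interval, since
   their total j(2j+1) has the wrong parity: either the label p+1 is replaced
   by 4p+1, or one sum is moved away from the interval. *)
Definition hole_first (p k : nat) : nat :=
  if k < p then k.+1 else if k < p.*2 - 1 then k + 3 else p + 2.
Definition hole_second (p k : nat) : nat :=
  if k < p then 4 * p + 1 - 2 * k
  else if k < p.*2 - 1 then 6 * p - 2 - 2 * k else 4 * p.

Lemma hole_pairing_vertices p : 0 < p ->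
  perm_eq (vertex_labels p.*2 (hole_first p) (hole_second p))
    (rem p.+1 (iota 1 (4 * p + 1))).
Proof.
move=> p_gt0; have p_in : p.+1 \in iota 1 (4 * p + 1) by rewrite mem_iota; lia.
apply: uniq_perm_subset.
- by apply: uniq_vertex_labels => k1 k2; rewrite /hole_first /hole_second; piecewise_lia.
- by rewrite rem_uniq ?iota_uniq.
- move=> x /mem_vertex_labels[k k_lt x_k]; rewrite mem_rem_uniq ?iota_uniq // inE mem_iota.
  by case: x_k => ->; rewrite /hole_first /hole_second; piecewise_lia.
- by rewrite size_rem // size_iota size_vertex_labels; lia.
Qed.

Lemma hole_pairing_sums p :
  perm_eq (sum_labels p.*2 (hole_first p) (hole_second p)) (iota (3 * p + 3) p.*2).
Proof.
apply: perm_iota_window; last by rewrite size_sum_labels.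
  by apply: uniq_map_iota => k1 k2; rewrite /hole_first /hole_second; piecewise_lia.
by move=> x /mem_sum_labels[k k_lt ->]; rewrite /hole_first /hole_second; piecewise_lia.
Qed.

Definition near_second (p k : nat) : nat :=
  if k < p then 4 * p - 1 - 2 * k
  else if k < p.*2 - 1 then 6 * p - 2 - 2 * k else 4 * p.

Lemma near_pairing_vertices p :
  perm_eq (vertex_labels p.*2 succn (near_second p)) (iota 1 (p.*2).*2).
Proof.
apply: perm_iota_window; last by rewrite size_vertex_labels.
  by apply: uniq_vertex_labels => k1 k2; rewrite /near_second; piecewise_lia.
by move=> x /mem_vertex_labels[k k_lt [->|->]]; rewrite /near_second; piecewise_lia.
Qed.

Lemma near_pairing_sums p : 0 < p ->
  perm_eq (sum_labels p.*2 succn (near_second p))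
    (rcons (iota (3 * p + 1) (p.*2 - 1)) (6 * p)).
Proof.
move=> p_gt0; apply: uniq_perm_subset.
- by apply: uniq_map_iota => k1 k2; rewrite /near_second; piecewise_lia.
- by rewrite rcons_uniq iota_uniq mem_iota andbT; lia.
- move=> x /mem_sum_labels[k k_lt ->]; rewrite mem_rcons inE mem_iota.
  by rewrite /near_second; piecewise_lia.
- by rewrite size_rcons size_iota size_sum_labels; lia.
Qed.

Definition triple_first (s k : nat) : nat :=
  if k < 2 * s then 4 * s - 2 * k
  else if k < 3 * s - 1 then 8 * s - (2 * k + 3)
  else if k < 4 * s - 3 then 8 * s - (2 * k + 5)
  else if k < 4 * s - 2 then 1
  else if k < 4 * s - 1 then 2 * s - 1
  else 4 * s - 1.
Definition triple_second (s k : nat) : nat :=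
  if k < 2 * s then 8 * s + k
  else if k < 3 * s - 1 then k + 2 * s + 1
  else if k < 4 * s - 3 then k + 2 * s + 3
  else if k < 4 * s - 2 then 5 * s
  else if k < 4 * s - 1 then 6 * s
  else 6 * s + 1.

Lemma triple_system s : 1 < s ->
  perm_eq (vertex_labels (4 * s) (triple_first s) (triple_second s) ++
           sum_labels (4 * s) (triple_first s) (triple_second s))
    (iota 1 (12 * s)).
Proof.
move=> s_gt1; apply: perm_iota_window.
- rewrite cat_uniq; apply/and3P; split.
  + apply: uniq_vertex_labels => k1 k2;
      by rewrite /triple_first /triple_second; piecewise_lia.
  + apply/hasPn => _ /mem_sum_labels[k k_lt ->].
    apply/negP => /mem_vertex_labels[k' k'_lt].
    by rewrite /triple_first /triple_second; piecewise_lia.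
  + apply: uniq_map_iota => k1 k2;
      by rewrite /triple_first /triple_second; piecewise_lia.
- move=> x; rewrite mem_cat.
  case/orP=> [/mem_vertex_labels[k k_lt [->|->]] | /mem_sum_labels[k k_lt ->]];
    by rewrite /triple_first /triple_second; piecewise_lia.
- by rewrite size_cat size_vertex_labels size_sum_labels; lia.
Qed.

Lemma triple_vertices_lt s :
  {in vertex_labels (4 * s) (triple_first s) (triple_second s), forall x, x < 12 * s}.
Proof.
move=> x /mem_vertex_labels[k k_lt [->|->]];
  by rewrite /triple_first /triple_second; piecewise_lia.
Qed.

(** * Cordial labelings of friendship graphs *)

Lemma cordial_odd_sparse m p :
  p.*2.+1 * 3 <= m -> Zm_cordial m (friendship_edges p.*2.+1).
Proof.
move=> m_ge; have m_gt0 : 0 < m by lia.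
have V := shift_perm_iota p (odd_pairing_vertices p).
have S := shift_perm_iota p.*2 (odd_pairing_sums p).
rewrite -vertex_labels_shift in V; rewrite -sum_labels_shift in S.
apply: (cordial_of_separated_labels (f := shift p succn) (g := shift p (odd_second p))
          m_gt0 (lo := p.+1) (mid := 5 * p + 3)).
- by rewrite (perm_uniq V) iota_uniq.
- by rewrite (perm_uniq S) iota_uniq.
- by move=> x; rewrite (perm_mem V) mem_iota; lia.
- by move=> x; rewrite (perm_mem S) mem_iota; lia.
- lia.
- lia.
Qed.

Lemma cordial_odd_dense m p :
  (p.*2.+1).*2 < m -> m < p.*2.+1 * 3 -> Zm_cordial m (friendship_edges p.*2.+1).
Proof.
move=> m_gt m_lt; have m_gt0 : 0 < m by lia.
set t := m - (5 * p + 2).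
have V := shift_perm_iota t (odd_pairing_vertices p).
have S := shift_perm_iota t.*2 (odd_pairing_sums p).
rewrite -vertex_labels_shift addn1 in V; rewrite -sum_labels_shift in S.
apply: (cordial_of_covering_labels m_gt0 V (lo := t.*2 + (3 * p + 3))).
- by rewrite (perm_uniq S) iota_uniq.
- by move=> x; rewrite (perm_mem S) mem_iota; lia.
- by move=> x; rewrite (perm_mem S) !mem_iota; lia.
- lia.
Qed.

Lemma cordial_even_sparse m p :
  0 < p -> p.*2 * 3 < m -> Zm_cordial m (friendship_edges p.*2).
Proof.
move=> p_gt0 m_gt; have m_gt0 : 0 < m by lia.
set t := p.-1.
have V := perm_map (addn t) (hole_pairing_vertices p_gt0).
have S := shift_perm_iota t.*2 (hole_pairing_sums p).
rewrite -vertex_labels_shift in V; rewrite -sum_labels_shift in S.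
apply: (cordial_of_separated_labels (f := shift t (hole_first p))
          (g := shift t (hole_second p)) m_gt0 (lo := p) (mid := 5 * p + 1)).
- by rewrite (perm_uniq V) map_inj_uniq ?rem_uniq ?iota_uniq //; apply: addnI.
- by rewrite (perm_uniq S) iota_uniq.
- move=> x; rewrite (perm_mem V) => /mapP[y /mem_rem].
  by rewrite mem_iota => y_in ->; lia.
- by move=> x; rewrite (perm_mem S) mem_iota; lia.
- lia.
- lia.
Qed.

Lemma cordial_even_dense m p :
  0 < p -> p.*2.*2 <= m -> m < p.*2 * 3 -> (p.*2.*2 < m -> 1 < p) ->
  Zm_cordial m (friendship_edges p.*2).
Proof.
move=> p_gt0 m_ge m_lt tight; have m_gt0 : 0 < m by lia.
set t := m.+1 - 5 * p.
have V := shift_perm_iota t (near_pairing_vertices p).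
have S := perm_map (addn t.*2) (near_pairing_sums p_gt0).
rewrite -vertex_labels_shift addn1 in V.
rewrite -sum_labels_shift map_rcons -iotaDl in S.
apply: (cordial_of_covering_labels m_gt0 V (lo := t.*2 + (3 * p + 1))).
- by rewrite (perm_uniq S) rcons_uniq iota_uniq mem_iota andbT; lia.
- by move=> x; rewrite (perm_mem S) mem_rcons inE mem_iota; lia.
- by move=> x; rewrite (perm_mem S) mem_rcons inE !mem_iota; lia.
- lia.
Qed.

Lemma cordial_triple m s :
  m = 12 * s -> 1 < s -> Zm_cordial m (friendship_edges (4 * s)).
Proof.
move=> -> s_gt1; have m_gt0 : 0 < 12 * s by lia.
have E_mem := perm_mem (triple_system s_gt1).
apply: (cordial_of_distinct_labels (f := triple_first s) (g := triple_second s)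
          m_gt0 (lo := 1)).
- by rewrite (perm_uniq (triple_system s_gt1)) iota_uniq.
- by move=> x; rewrite E_mem mem_iota.
- move=> x x_V; have := triple_vertices_lt x_V.
  have : x \in iota 1 (12 * s) by rewrite -E_mem mem_cat x_V.
  by rewrite mem_iota; lia.
Qed.

Lemma cordial_5_2 : Zm_cordial 5 (friendship_edges 2).
Proof.
have m_gt0 : 0 < 5 by [].
apply: (cordial_of_balanced (f := nth 0 [:: 1; 2]) (g := nth 0 [:: 4; 3]) m_gt0);
  exact: balanced_all.
Qed.

Lemma cordial_12_4 : Zm_cordial 12 (friendship_edges 4).
Proof.
have m_gt0 : 0 < 12 by [].
apply: (cordial_of_balanced (f := nth 0 [:: 1; 3; 4; 2]) (g := nth 0 [:: 5; 7; 8; 9])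
          m_gt0); exact: balanced_all.
Qed.

Lemma friendship_cordial m j :
  0 < m -> j.*2 < m \/ j.*2 = m /\ ~~ odd j -> (m = 3 * j -> j %% 4 != 2) ->
  Zm_cordial m (friendship_edges j).
Proof.
move=> m_gt0 room triple; have [-> | j_gt0] := posnP j.
  exact: (cordial_of_distinct_labels (f := id) (g := id) m_gt0 (lo := 0)).
have [j_odd | j_even] := boolP (odd j).
  have [p j_eq] : exists p, j = p.*2.+1 by exists j./2; lia.
  rewrite j_eq; have [m_ge | m_lt] := leqP (p.*2.+1 * 3) m.
    exact: cordial_odd_sparse.
  by apply: cordial_odd_dense => //; lia.
have [p j_eq] : exists p, j = p.*2 by exists j./2; lia.
have p_gt0 : 0 < p by lia.
rewrite j_eq; case: (ltngtP (p.*2 * 3) m) => [m_gt | m_lt | m_eq].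
- exact: cordial_even_sparse.
- have [m5 | m_ne5] := eqVneq m 5; last by apply: cordial_even_dense => //; lia.
  have p1 : p = 1 by lia.
  by rewrite p1 m5; exact: cordial_5_2.
- have [s s_eq] : exists s, p.*2 = 4 * s by exists (j %/ 4); lia.
  rewrite s_eq; have [s_gt1 | s_le1] := ltnP 1 s.
    by apply: cordial_triple s_gt1; lia.
  have s1 : s = 1 by lia.
  have m12 : m = 12 by lia.
  by rewrite s1 m12; exact: cordial_12_4.
Qed.

Theorem theorem10p1 (m : nat) (hm : 1 <= m) :
  (~ (m %% 12 \in [:: 2; 4; 6; 8; 10]) ->
     forall j : nat, j <= m./2 -> Zm_cordial m (friendship_edges j)) /\
  (m %% 12 = 2 ->
     forall j : nat, j <= m./2 - 1 -> Zm_cordial m (friendship_edges j)).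
Proof.
split=> [m_mod | m_mod] j j_le; apply: friendship_cordial => //;
  by move: m_mod; rewrite ?inE; lia.
Qed.
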